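(* For every integer $n>2$, $\delta(n) < n/2$.
   Context: A double-$n$ string is a string of length $2n$ over an alphabet of $n$ symbols in which each symbol appears exactly twice. Positions in the string are numbered $1,\dots,2n$. The distance between two distinct symbols is the minimum, over an occurrence of the first symbol and an occurrence of the second, of the absolute difference of their positions (so adjacent entries have distance $1$). The diameter of a double-$n$ string ($n\ge 2$) is the maximum of the distance over all pairs of distinct symbols. $\delta(n)$ denotes the minimum diameter over all double-$n$ strings. *)

From mathcomp Require Import all_boot.
Set Implicit Arguments. Unset Strict Implicit. Unset Printing Implicit Defensive.

(* A string of length 2n over the alphabet 'I_n; positions 0..2n-1
   (a shift of the paper's 1..2n, which does not affect differences). *)
Definition dstring (n : nat) := {ffun 'I_(2 * n) -> 'I_n}.

Definition is_double (n : nat) (s : dstring n) : bool :=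
  [forall a : 'I_n, #|[pred i | s i == a]| == 2].

Definition absdiff (i j : nat) : nat := (i - j) + (j - i).

(* distance between symbols a and b: min over occurrences of |i - j|
   (default 2n is an upper bound on all differences, and is never reached
   for symbols that occur) *)
Definition dist (n : nat) (s : dstring n) (a b : 'I_n) : nat :=
  \big[minn/(2 * n)]_(i : 'I_(2 * n) | s i == a)
    \big[minn/(2 * n)]_(j : 'I_(2 * n) | s j == b) absdiff i j.

Definition diameter (n : nat) (s : dstring n) : nat :=
  \max_(a : 'I_n) \max_(b : 'I_n | a != b) dist s a b.

(* delta n: minimum diameter over all double-n strings (default 2n is
   an upper bound on every diameter; double-n strings exist for all n) *)
Definition delta (n : nat) : nat :=
  \big[minn/(2 * n)]_(s : dstring n | is_double s) diameter s.

From mathcomp Require Import all_boot order zify.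
Import Order.TTheory.

Set Implicit Arguments.
Unset Strict Implicit.
Unset Printing Implicit Defensive.

(* Proof idea.  For n > 2 put m = n/2 (rounded down) and consider the
   double-n string

       0 1 2 ... m m+1 ... n-1 | 0 2 3 ... m 1 m+1 ... n-1,

   whose first half lists the symbols in order and whose second half is
   the same list with the block 1..m rotated left by one place.  For two
   symbols a < b, either they are already close in the first half
   (2(b - a) < n), or a is small and b is large, and then pairing one
   occurrence in the second half with a suitable other occurrence gives
   a distance below n/2.  Hence this string has diameter < n/2, and so
   does the minimum delta n. *)

Lemma bigminn_le_cond (I : finType) (P : pred I) (F : I -> nat) x j :
  P j -> \big[minn/x]_(i | P i) F i <= F j.
Proof. by move=> Pj; have := bigmin_le_cond x F Pj; rewrite minEnat. Qed.

Lemma dist_le n (s : dstring n) a b (i j : 'I_(2 * n)) :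
  s i == a -> s j == b -> dist s a b <= absdiff i j.
Proof.
move=> si sj; rewrite /dist.
apply: leq_trans (bigminn_le_cond
  (fun i : 'I_(2 * n) => \big[minn/(2 * n)]_(j | s j == b) absdiff i j) _ si) _.
exact: bigminn_le_cond.
Qed.

(* The second half of the string: position n + k carries the symbol
   rot_sym m k, i.e. the second half reads 0, 2, 3, ..., m, 1, m+1, ... *)
Definition rot_sym (m k : nat) : nat :=
  if k == 0 then 0 else if k < m then k.+1 else if k == m then 1 else k.

(* Inverse of rot_sym: the offset in the second half at which symbol a
   occurs. *)
Definition rot_pos (m a : nat) : nat :=
  if a == 0 then 0 else if a == 1 then m else if a <= m then a.-1 else a.

Lemma rot_sym_lt m n k : m < n -> k < n -> rot_sym m k < n.
Proof. by rewrite /rot_sym; repeat (case: ifP => ?); lia. Qed.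

Lemma rot_pos_lt m n a : m < n -> a < n -> rot_pos m a < n.
Proof. by rewrite /rot_pos; repeat (case: ifP => ?); lia. Qed.

Lemma rot_sym_eq m k a : 0 < m -> (rot_sym m k == a) = (k == rot_pos m a).
Proof.
by move=> m_gt0; rewrite /rot_sym /rot_pos; repeat (case: ifP => ?); apply/eqP/eqP; lia.
Qed.

Definition occ_pos (n m : nat) (first : bool) (a : nat) : nat :=
  if first then a else n + rot_pos m a.

Lemma close_occurrences n m a b :
  2 * m <= n <= 2 * m + 1 -> 2 < n -> a < n -> b < n -> a != b ->
  exists x y : bool, 2 * absdiff (occ_pos n m x a) (occ_pos n m y b) < n.
Proof.
move=> n_m n_gt2 a_lt b_lt a_neq_b.
wlog a_lt_b : a b a_lt b_lt a_neq_b / a < b.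
  move=> sym; case: (ltngtP a b) => [lt_ab|lt_ba|eq_ab]; first exact: sym.
  - rewrite eq_sym in a_neq_b.
    have [x [y close]] := sym b a b_lt a_lt a_neq_b lt_ba.
    by exists y, x; rewrite /absdiff addnC.
  - by rewrite eq_ab eqxx in a_neq_b.
rewrite /absdiff /occ_pos /rot_pos.
have [near|far] := leqP (2 * (b - a)) (n - 1); first by exists true, true; lia.
(* b - a is large, so a <= 1 or b > m. *)
case: (a =P 0) => [a0|a_ne0].
  have [b_le_m|b_gt_m] := leqP b m.
    by exists false, false; repeat (case: ifP => ?); lia.
  by exists false, true; repeat (case: ifP => ?); lia.
case: (a =P 1) => [a1|a_ne1]; first by exists false, false; repeat (case: ifP => ?); lia.
by exists false, true; repeat (case: ifP => ?); lia.
Qed.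

Section RotatedString.

Variable n : nat.

Let m := n %/ 2.

Let half_bounds : 2 * m <= n <= 2 * m + 1. Proof. rewrite /m; lia. Qed.

Definition rot_symbol (i : nat) : nat := if i < n then i else rot_sym m (i - n).

Lemma rot_symbol_lt (i : 'I_(2 * n)) : rot_symbol i < n.
Proof.
have i_lt := ltn_ord i; rewrite /rot_symbol; case: ifP => // i_ge.
apply: rot_sym_lt; rewrite /m; lia.
Qed.

Definition rot_string : dstring n := [ffun i => Ordinal (rot_symbol_lt i)].

Lemma occ_pos_lt (first : bool) (a : 'I_n) : occ_pos n m first a < 2 * n.
Proof.
have a_lt := ltn_ord a; have : rot_pos m a < n by apply: rot_pos_lt; rewrite /m; lia.
by rewrite /occ_pos; case: first; lia.
Qed.

Definition occurrence (first : bool) (a : 'I_n) : 'I_(2 * n) :=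
  Ordinal (occ_pos_lt first a).

Hypothesis n_gt2 : 2 < n.

Lemma rot_string_occ (i : 'I_(2 * n)) (a : 'I_n) :
  (rot_string i == a) = (val i == occ_pos n m true a) || (val i == occ_pos n m false a).
Proof.
have i_lt := ltn_ord i; have a_lt := ltn_ord a.
have rot_a_lt : rot_pos m a < n by apply: rot_pos_lt; rewrite /m; lia.
rewrite -val_eqE ffunE /= /rot_symbol.
case: ifP => i_small; first by apply/eqP/orP => [->|[]/eqP]; [left | |]; lia.
rewrite rot_sym_eq; last by rewrite /m; lia.
by apply/eqP/orP => [?|[]/eqP]; [right | |]; lia.
Qed.

Lemma occurrenceP (first : bool) (a : 'I_n) : rot_string (occurrence first a) == a.
Proof. by rewrite rot_string_occ /=; case: first; rewrite eqxx ?orbT. Qed.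

(* Since its two designated positions differ, every symbol occurs twice. *)
Lemma rot_string_double : is_double rot_string.
Proof.
apply/forallP => a; apply/eqP.
rewrite (@eq_card _ _ (mem [set occurrence true a; occurrence false a])); last first.
  by move=> i; rewrite !inE rot_string_occ -!val_eqE.
rewrite cards2; case: eqP => // /(congr1 val); rewrite /= /occ_pos.
by have := ltn_ord a; lia.
Qed.

Lemma rot_string_diameter : 2 * diameter rot_string < n.
Proof.
suff : diameter rot_string <= (n - 1) %/ 2 by lia.
apply/bigmax_leqP => a _; apply/bigmax_leqP => b a_neq_b.
have [x [y close]] := close_occurrences half_bounds n_gt2 (ltn_ord a) (ltn_ord b) a_neq_b.
have := dist_le (occurrenceP x a) (occurrenceP y b); rewrite /=; lia.
Qed.

End RotatedString.

Theorem lemma3p1 (n : nat) : 2 < n -> 2 * delta n < n.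
Proof.
move=> n_gt2.
have delta_le : delta n <= diameter (rot_string n).
  exact: bigminn_le_cond (rot_string_double n_gt2).
have := rot_string_diameter n_gt2; lia.
Qed.
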